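(* Let $\varphi\colon[\mathbb{F}_2,\mathbb{F}_2]\to\mathbb{Z}$ be the homomorphism defined below. If $g\in[\mathbb{F}_2,\mathbb{F}_2]$ is a product of two squares in $\mathbb{F}_2$ (i.e. $g=a^2b^2$ with $a,b\in\mathbb{F}_2$), then $\varphi(g)$ is even.
   Context: $\mathbb{F}_2$ is the free group on $x,y$. Let $\tilde K$ be the graph with vertex set $\mathbb{Z}^2$ and oriented edges $x^iy^jX$ from $(i,j)$ to $(i+1,j)$ and $x^iy^jY$ from $(i,j)$ to $(i,j+1)$ (the universal abelian cover of the wedge of two circles). A $1$-chain is written $\alpha=P_\alpha(x,y)X+Q_\alpha(x,y)Y$ with $P_\alpha,Q_\alpha$ integer Laurent polynomials (the coefficient of $x^iy^j$ in $P_\alpha$ is the coefficient of the edge $x^iy^jX$, similarly for $Q_\alpha$). For $g\in[\mathbb{F}_2,\mathbb{F}_2]$ written as a word in $x^{\pm1},y^{\pm1}$, the associated cycle $\alpha_g$ is the $1$-cycle traced by the lattice path starting at $(0,0)$ in which a letter $x$ (resp. $x^{-1}$, $y$, $y^{-1}$) moves by $(1,0)$ (resp. $(-1,0)$, $(0,1)$, $(0,-1)$) along the corresponding edge, each edge counted with sign $+1$ if traversed in its orientation and $-1$ otherwise; its homology class depends only on $g$. Let $f_\alpha(y)=P_\alpha(1,y)$. Define $\varphi(g)=f_{\alpha_g}'(1)$; this is a homomorphism $[\mathbb{F}_2,\mathbb{F}_2]\to\mathbb{Z}$. *)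

From mathcomp Require Import all_boot all_order all_algebra.
Set Implicit Arguments. Unset Strict Implicit. Unset Printing Implicit Defensive.
Import Order.TTheory GRing.Theory Num.Theory.
Local Open Scope ring_scope.

(* A letter of the alphabet {x, x^-1, y, y^-1}: (is_y, is_inverse). *)
Definition letter := (bool * bool)%type.
Definition lx : letter := (false, false).
Definition lX : letter := (false, true).
Definition ly : letter := (true, false).
Definition lY : letter := (true, true).

Definition inv_letter (l : letter) : letter := (l.1, ~~ l.2).

Definition reduce (w : seq letter) : seq letter :=
  foldr (fun l acc => match acc with
                      | h :: t => if h == inv_letter l then t else l :: acc
                      | [::] => [:: l]
                      end) [::] w.

(* Elements of F_2 are the freely reduced words. *)
Definition reduced (w : seq letter) : Prop := reduce w = w.

Definition fmul (u v : seq letter) : seq letter := reduce (u ++ v).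
Definition finv (u : seq letter) : seq letter := rev (map inv_letter u).
Definition fcomm (u v : seq letter) : seq letter :=
  fmul (fmul (fmul (finv u) (finv v)) u) v.

Inductive in_comm_sub : seq letter -> Prop :=
| comm_one : in_comm_sub [::]
| comm_gen u v : reduced u -> reduced v -> in_comm_sub (fcomm u v)
| comm_mul g h : in_comm_sub g -> in_comm_sub h -> in_comm_sub (fmul g h)
| comm_inv g : in_comm_sub g -> in_comm_sub (finv g).

(* The 1-chain traced by the lattice path of a word, starting at vertex p:
   a list of (edge, sign), where edge = (is_Y_edge, (i,j)) denotes the
   edge x^i y^j X (resp. x^i y^j Y) starting at (i,j). *)
Fixpoint path_chain (p : int * int) (w : seq letter)
  : seq ((bool * (int * int)) * int) :=
  match w with
  | [::] => [::]
  | l :: w' =>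
    let '(i, j) := p in
    match l with
    | (false, false) => ((false, (i, j)), 1) :: path_chain (i + 1, j) w'
    | (false, true)  => ((false, (i - 1, j)), -1) :: path_chain (i - 1, j) w'
    | (true, false)  => ((true, (i, j)), 1) :: path_chain (i, j + 1) w'
    | (true, true)   => ((true, (i, j - 1)), -1) :: path_chain (i, j - 1) w'
    end
  end.

Definition alpha (g : seq letter) := path_chain (0, 0) g.

(* f_alpha(y) = P_alpha(1,y) = sum over X-edges x^i y^j X of (coeff) * y^j;
   its derivative at y = 1 is sum over X-edges of (coeff) * j. *)
Definition fprime1 (a : seq ((bool * (int * int)) * int)) : int :=
  \sum_(e <- a | ~~ e.1.1) e.2 * e.1.2.2.

Definition phi (g : seq letter) : int := fprime1 (alpha g).

(* phi w is the sum, over the x-letters of w, of their sign times the current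
   y-height.  Writing e_x, e_y for the exponent sums, this gives
   phi(uv) = phi u + phi v + e_y(u) e_x(v), and phi, e_x, e_y are invariant
   under free reduction; hence phi(a^2) = 2 phi(a) + e_y(a) e_x(a).  If a^2 b^2
   lies in the commutator subgroup its exponent sums vanish, so e(b) = -e(a),
   and the cross terms e_y(a) e_x(a) + e_y(b) e_x(b), each possibly odd, add up
   to 2 e_y(a) e_x(a). *)
From Pilot Require Import Defs.
From mathcomp Require Import all_boot all_order all_algebra.
From mathcomp Require Import ring zify.
Local Open Scope ring_scope.
Import GRing.Theory.

Lemma reduce_cons_cases (l : letter) (w : seq letter) :
  reduce (l :: w) = l :: reduce w \/ reduce w = inv_letter l :: reduce (l :: w).
Proof.
rewrite [reduce (l :: w)]/= -/(reduce w).
case: (reduce w) => [|h t]; first by left.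
by case: eqP => [->|_]; [right | left].
Qed.

Definition exponent (l : letter) : int := if l.2 then -1 else 1.

Lemma exponent_inv (l : letter) : exponent (inv_letter l) = - exponent l.
Proof. by case: l => [? []]. Qed.

(* [exponent_sum false] is the exponent sum in x, [exponent_sum true] in y. *)
Definition exponent_sum (b : bool) (w : seq letter) : int :=
  \sum_(l <- w | l.1 == b) exponent l.

Lemma exponent_sum_nil b : exponent_sum b [::] = 0.
Proof. exact: big_nil. Qed.

Lemma exponent_sum_cons b l w :
  exponent_sum b (l :: w) = (if l.1 == b then exponent l else 0) + exponent_sum b w.
Proof. by rewrite /exponent_sum big_cons; case: ifP; rewrite ?add0r. Qed.

Lemma exponent_sum_cat b u v :
  exponent_sum b (u ++ v) = exponent_sum b u + exponent_sum b v.
Proof. exact: big_cat. Qed.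

Lemma exponent_sum_finv b u : exponent_sum b (Defs.finv u) = - exponent_sum b u.
Proof.
rewrite /exponent_sum /Defs.finv big_rev big_map -sumrN.
by apply: eq_bigr => l _; rewrite exponent_inv.
Qed.

Lemma exponent_sum_reduce b w : exponent_sum b (reduce w) = exponent_sum b w.
Proof.
elim: w => [|l w IHw] //.
case: (reduce_cons_cases l w) => [-> | Ew].
  by rewrite !exponent_sum_cons IHw.
move: IHw; rewrite Ew !exponent_sum_cons exponent_inv /=.
by case: (l.1 == b); lia.
Qed.

Lemma exponent_sum_fmul b u v :
  exponent_sum b (fmul u v) = exponent_sum b u + exponent_sum b v.
Proof. by rewrite /fmul exponent_sum_reduce exponent_sum_cat. Qed.

Lemma exponent_sum_comm_sub b g : in_comm_sub g -> exponent_sum b g = 0.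
Proof.
elim=> [|u v _ _|g1 g2 _ IHg1 _ IHg2|g1 _ IHg1].
- exact: exponent_sum_nil.
- rewrite /fcomm !exponent_sum_fmul !exponent_sum_finv; lia.
- by rewrite exponent_sum_fmul IHg1 IHg2.
- by rewrite exponent_sum_finv IHg1.
Qed.

Lemma phi_nil : phi [::] = 0.
Proof. exact: big_nil. Qed.

Lemma fprime1_path_chain i j w :
  fprime1 (path_chain (i, j) w) = phi w + j * exponent_sum false w.
Proof.
rewrite /fprime1.
elim: w i j => [|l w IHw] i j /=; first by rewrite exponent_sum_nil mulr0 addr0.
rewrite [phi (l :: w)]/phi /alpha /fprime1 exponent_sum_cons.
by case: l => [[] []]; rewrite /= !big_cons /= !IHw /exponent /=; ring.
Qed.

Lemma phi_cons l w :
  phi (l :: w) = phi w + exponent_sum true [:: l] * exponent_sum false w.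
Proof.
rewrite [LHS]/phi /alpha /fprime1 exponent_sum_cons exponent_sum_nil addr0.
case: l => [[] []];
  by rewrite /= big_cons /= -/(fprime1 _) fprime1_path_chain /exponent /=; ring.
Qed.

Lemma phi_cat u v :
  phi (u ++ v) = phi u + phi v + exponent_sum true u * exponent_sum false v.
Proof.
elim: u => [|l u IHu]; first by rewrite phi_nil exponent_sum_nil mul0r add0r addr0.
rewrite cat_cons !phi_cons IHu exponent_sum_cat (exponent_sum_cat _ [:: l] u).
ring.
Qed.

Lemma phi_reduce w : phi (reduce w) = phi w.
Proof.
elim: w => [|l w IHw] //.
case: (reduce_cons_cases l w) => [-> | Ew].
  by rewrite !phi_cons IHw exponent_sum_reduce.
move: IHw; rewrite {}Ew !phi_cons !(exponent_sum_reduce _ (l :: w)).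
rewrite !exponent_sum_cons exponent_sum_nil.
by case: l => [[] []]; rewrite /exponent /=; lia.
Qed.

Lemma phi_fmul u v :
  phi (fmul u v) = phi u + phi v + exponent_sum true u * exponent_sum false v.
Proof. by rewrite /fmul phi_reduce phi_cat. Qed.

Lemma phi_square a :
  phi (fmul a a) = 2 * phi a + exponent_sum true a * exponent_sum false a.
Proof. by rewrite phi_fmul; ring. Qed.

Theorem lemma2p3 (a b : seq letter) :
  reduced a -> reduced b ->
  in_comm_sub (fmul (fmul a a) (fmul b b)) ->
  (2 %| phi (fmul (fmul a a) (fmul b b)))%Z.
Proof.
move=> _ _ comm_ab.
have exponent_sum_b c : exponent_sum c b = - exponent_sum c a.
  have := exponent_sum_comm_sub c _ comm_ab.
  rewrite !exponent_sum_fmul; lia.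
rewrite phi_fmul !phi_square !exponent_sum_fmul !exponent_sum_b.
apply/dvdzP; exists (phi a + phi b - exponent_sum true a * exponent_sum false a).
ring.
Qed.
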